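(* Let $p$ be an odd prime and $n\geq 3$ an integer. Let $G$ be the extraspecial group of order $p^{2n+1}$ and exponent $p$, written as $G=\langle x_1,\dots,x_n,y_1,\dots,y_n\rangle$ with $Z(G)=G'=\langle c\rangle$ of order $p$, where $[x_i,x_j]=1$, $[y_i,y_j]=1$ for all $i,j$, $[x_i,y_i]=c$ for all $i$, and $[x_i,y_j]=1$ for $i\neq j$. Then the assignment $x_1\mapsto x_1$, $x_2\mapsto x_1x_2$, $x_3\mapsto x_2x_3$, $x_i\mapsto x_i$ for $i>3$, $y_1\mapsto y_1y_2^{-1}y_3$, $y_2\mapsto y_2y_3^{-1}$, $y_i\mapsto y_i$ for $i>2$ extends to an automorphism $\alpha$ of $G$ of order $p$, and the semidirect product $P=G\rtimes\langle\alpha\rangle$ (of order $p^{2n+2}$) has derived length $3$ and $\mathrm{cd}(P)=\{1,p,p^n\}$.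
   Context: Commutators are $[g,h]=g^{-1}h^{-1}gh$. For a finite group $X$, $\mathrm{cd}(X)=\{\chi(1)\mid \chi\in\mathrm{Irr}(X)\}$ is the set of degrees of the complex irreducible characters of $X$. The derived length of a solvable group is the least $k$ with $X^{(k)}=1$, where $X^{(0)}=X$ and $X^{(i+1)}=[X^{(i)},X^{(i)}]$. *)

From mathcomp Require Import all_boot all_order all_algebra all_fingroup all_solvable all_field all_character.
Set Implicit Arguments. Unset Strict Implicit. Unset Printing Implicit Defensive.
Import GroupScope.

Definition cd (gT : finGroupType) (X : {group gT}) : pred algC :=
  [pred d | [exists i : Iirr X, ('chi[X]_i 1%g == d)%R]].

Definition has_derived_length (gT : finGroupType) (X : {group gT}) (k : nat) : Prop :=
  X^`(k) = 1 /\ (forall j, j < k -> X^`(j) != 1).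

(* The (external) semidirect product G x| <[a]> for an automorphism a of G,
   realised as the subgroup  G * <[a]>  of the external semidirect product
   G x| Aut(G) (action of Aut G on G by evaluation). *)
Definition sdprod_cyc_aut (gT : finGroupType) (G : {group gT}) (a : {perm gT})
  : {group sdprod_by (aut_groupAction G)} :=
  (sdpair1 (aut_groupAction G) @* G <*> sdpair2 (aut_groupAction G) @* <[a]>)%G.

From mathcomp Require Import all_boot all_order all_algebra all_fingroup all_solvable all_field all_character.
From mathcomp Require Import zify.
Set Implicit Arguments. Unset Strict Implicit. Unset Printing Implicit Defensive.
Import GroupScope.
Import Order.TTheory GRing.Theory Num.Theory.

(* The automorphism is obtained as the graph of a morphism: the subgroup of
   G x G generated by the pairs (x_i, alpha x_i) and (y_i, alpha y_i) satisfies
   the defining relations of G (the images commute in the same pattern, have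
   exponent p and pair to c^(i == j)), so it has order at most p^(2n+1) = |G|
   and its first projection is injective.  The powers of alpha are unipotent
   on the generators, with exponents k, C(k,2) and C(k+1,2), so alpha^p = 1
   because p is odd.  In P = G x| <alpha> we have P' <= G and G' = <c> is
   abelian, while x_1 = [x_2, alpha] and y_1^-1 lie in P' and do not commute;
   hence P has derived length 3.  The irreducible characters of G have degree
   1 or p^n, |P : G| = p, and the degrees of P are powers of p whose squares
   are below |P| = p^(2n+2); so a character of P lies over a linear character
   and has degree 1 or p, or over one of degree p^n and has degree p^n.
   Degree p occurs over a linear character of G that is nontrivial on
   x_0 = [x_1, alpha]. *)

Section Terms.
Variable T : finType.
Implicit Types w : nat -> T.

Definition terms w k : {set T} := [set w (val i) | i : 'I_k].

Lemma mem_terms w k i : i < k -> w i \in terms w k.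
Proof. by move=> lt_ik; apply/imsetP; exists (Ordinal lt_ik). Qed.

Lemma terms0 w : terms w 0 = set0.
Proof. by apply/setP=> t; rewrite inE; apply/imsetP=> -[[]]. Qed.

Lemma termsS w k : terms w k.+1 = w k |: terms w k.
Proof.
apply/setP=> t; apply/imsetP/setU1P => [[[i lt_ik] _ ->] | [-> | /imsetP[i _ ->]]].
- rewrite /=; have := lt_ik; rewrite ltnS leq_eqVlt => /orP[/eqP-> | lt_ik']; first by left.
  by right; apply: mem_terms.
- by exists ord_max.
- by exists (widen_ord (leqnSn k) i).
Qed.

End Terms.

Lemma imset_terms (T U : finType) (f : T -> U) (w : nat -> T) k :
  f @: terms w k = terms (f \o w) k.
Proof. by rewrite -imset_comp. Qed.

Section CardGen.
Variable gT : finGroupType.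
Implicit Types (S : {set gT}) (w : nat -> gT).

Lemma card_joing_le (G H : {group gT}) : H \subset 'N(G) -> #|G <*> H| <= #|G| * #|H|.
Proof. by move=> nGH; rewrite norm_joinEr // dvdn_leq ?muln_gt0 ?cardG_gt0 ?dvdn_cardMg. Qed.

Lemma card_gen_setU1_le x S : x \in 'N(<<S>>) -> #|<<x |: S>>| <= #[x] * #|<<S>>|.
Proof.
move=> nSx; have ->: <<x |: S>> = <<S>> <*> <[x]> by rewrite joingC joing_idl joing_idr.
by rewrite mulnC card_joing_le // cycle_subG.
Qed.

Lemma card_gen_commuting_le p w k :
    0 < p -> (forall i j, i < k -> j < k -> commute (w i) (w j)) ->
    (forall i, i < k -> w i ^+ p = 1) ->
  #|<<terms w k>>| <= p ^ k.
Proof.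
move=> p_gt0; elim: k => [|k IHk] cww wp1; first by rewrite terms0 gen0 cards1.
rewrite termsS expnS; apply: leq_trans (card_gen_setU1_le _) (leq_mul _ _).
- rewrite (subsetP (cent_sub _)) // cent_gen; apply/centP=> _ /imsetP[i _ ->].
  exact: cww (ltnW (ltn_ord i)).
- by rewrite dvdn_leq // order_dvdn wp1.
- by apply: IHk => [i j lt_ik lt_jk | i lt_ik]; [apply: cww | apply: wp1]; apply: ltnW.
Qed.

Lemma card_heisenberg_gen_le p (u v : nat -> gT) d k :
    0 < p -> d ^+ p = 1 ->
    (forall i, i < k -> u i ^+ p = 1) -> (forall i, i < k -> v i ^+ p = 1) ->
    (forall i, i < k -> commute (u i) d) -> (forall i, i < k -> commute (v i) d) ->
    (forall i j, i < k -> j < k -> commute (u i) (u j)) ->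
    (forall i j, i < k -> j < k -> commute (v i) (v j)) ->
    (forall i j, i < k -> j < k -> [~ u i, v j] \in <[d]>) ->
  #|<<terms u k :|: terms v k>>| <= p ^ (2 * k + 1).
Proof.
move=> p_gt0 dp1 up1 vp1 cud cvd cuu cvv cuv.
set U := <<d |: terms u k>>; set V := <<terms v k>>.
have dU : d \in U by rewrite mem_gen ?setU11.
have uU i : i < k -> u i \in U by move=> lt_ik; rewrite mem_gen ?setU1r ?mem_terms.
have cardU : #|U| <= p ^ k.+1.
  rewrite expnS; apply: leq_trans (card_gen_setU1_le _) (leq_mul _ _).
  - rewrite (subsetP (cent_sub _)) // cent_gen; apply/centP=> _ /imsetP[i _ ->].
    exact/commute_sym/cud/ltn_ord.
  - by rewrite dvdn_leq // order_dvdn dp1.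
  - exact: card_gen_commuting_le.
have nUV : V \subset 'N(U).
  rewrite gen_subG; apply/subsetP=> _ /imsetP[j _ ->]; rewrite inE -genJ gen_subG.
  apply/subsetP=> _ /imsetP[g /setU1P[-> | /imsetP[i _ ->]] ->].
    by have /commgP/conjg_fixP -> : commute d (v j) by apply/commute_sym/cvd/ltn_ord.
  rewrite conjg_mulR groupM ?uU ?ltn_ord //.
  have sdU : <[d]> \subset U by rewrite cycle_subG.
  exact: subsetP sdU _ (cuv _ _ (ltn_ord i) (ltn_ord j)).
have sGUV : terms u k :|: terms v k \subset (d |: terms u k) :|: terms v k.
  by rewrite setSU ?subsetUr.
apply: leq_trans (subset_leq_card (genS sGUV)) _.
have ->: <<(d |: terms u k) :|: terms v k>> = U <*> V by rewrite joing_idl joing_idr.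
apply: leq_trans (card_joing_le nUV) _.
by rewrite mul2n -addnn addn1 -addSn expnD leq_mul // card_gen_commuting_le.
Qed.

End CardGen.

Lemma graph_morphism (aT rT : finGroupType) (G : {group aT}) (Gam : {group aT * rT}) :
    @fst aT rT @* Gam = G -> #|Gam| <= #|G| ->
  exists phi : {morphism G >-> rT}, {in Gam, forall w, phi w.1 = w.2}.
Proof.
move=> fstGam cardGam.
pose f := restrm (subsetT Gam) (@fst_morphism aT rT).
have imf : f @* Gam = G by rewrite morphim_restrm setIid.
have injf : 'injm f.
  by rewrite -card_im_injm imf eqn_leq cardGam andbT -{1}imf leq_morphim.
have phiM : {in G &, {morph (fun g => (invm injf g).2) : g h / g * h}}.
  by move=> g h Gg Gh /=; rewrite morphM ?imf.
exists (Morphism phiM) => w Gam_w /=.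
by have ->: w.1 = f w by []; rewrite invmE.
Qed.

Lemma Aut_gen_eq1 (gT : finGroupType) (S : {set gT}) (b : {perm gT}) :
  b \in Aut <<S>> -> {in S, forall s, b s = s} -> b = 1.
Proof.
move=> AutSb fixS.
have fixG : group_set [set g in <<S>> | b g == g].
  apply/group_setP; split=> [|g h].
    by rewrite inE group1; apply/eqP; apply: (morph1 (autm AutSb)).
  rewrite !inE => /andP[Sg /eqP bg] /andP[Sh /eqP bh].
  have bM : b (g * h) = b g * b h := morphM (autm AutSb) Sg Sh.
  by rewrite groupM //= bM bg bh eqxx.
have sSfix : <<S>> \subset Group fixG.
  by rewrite gen_subG; apply/subsetP=> s Ss; rewrite inE mem_gen ?fixS /=.
apply: (eq_Aut AutSb (group1 _)) => g Sg; rewrite perm1.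
by have /setIdP[_ /eqP] := subsetP sSfix g Sg.
Qed.

Section ClassTwo.
Variables (gT : finGroupType) (G : {group gT}).
Hypothesis G'Z : G^`(1) \subset 'Z(G).

Lemma commute_commg g h z : g \in G -> h \in G -> z \in G -> commute z [~ g, h].
Proof.
move=> Gg Gh Gz; have /setIP[_ /centP cGgh] := subsetP G'Z _ (mem_commg Gg Gh).
exact/commute_sym/cGgh.
Qed.

Lemma commMg_class2 g h z : g \in G -> h \in G -> z \in G ->
  [~ g * h, z] = [~ g, z] * [~ h, z].
Proof.
move=> Gg Gh Gz; rewrite commMgJ; congr (_ * _).
by apply/conjg_fixP/commgP/commute_sym; apply: commute_commg.
Qed.

Lemma commgM_class2 g h z : g \in G -> h \in G -> z \in G ->
  [~ g, h * z] = [~ g, h] * [~ g, z].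
Proof.
move=> Gg Gh Gz; rewrite commgMJ.
have /commgP/conjg_fixP -> : commute [~ g, h] z by apply/commute_sym; apply: commute_commg.
by apply: commute_commg; rewrite ?groupR.
Qed.

Lemma commgV_class2 g h : g \in G -> h \in G -> [~ g, h^-1] = [~ g, h]^-1.
Proof. by move=> Gg Gh; apply: commgV; apply: commute_commg. Qed.

End ClassTwo.

Section PairGroup.
Variables aT rT : finGroupType.
Implicit Types (g : aT) (h : rT).

Lemma expg_pair g h k : ((g, h) : aT * rT) ^+ k = (g ^+ k, h ^+ k).
Proof. by elim: k => // k IHk; rewrite !expgS IHk. Qed.

Lemma commute_pair g1 h1 g2 h2 : commute g1 g2 -> commute h1 h2 ->
  commute ((g1, h1) : aT * rT) (g2, h2).
Proof. by move=> c12 c12'; rewrite /commute -[LHS]/(g1 * g2, h1 * h2) c12 c12'. Qed.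

End PairGroup.

Section CyclicAutSdprod.
Variables (gT : finGroupType) (G : {group gT}) (a : {perm gT}).
Hypothesis AutGa : a \in Aut G.
Local Notation to := (aut_groupAction G).
Local Notation s1 := (sdpair1 to).
Local Notation s2 := (sdpair2 to).
Local Notation N := (s1 @* G).
Local Notation A := (s2 @* <[a]>).
Local Notation Q := (sdprod_cyc_aut G a).

Lemma commg_sdpair12 g : g \in G -> [~ s1 g, s2 a] = s1 (g^-1 * a g).
Proof.
move=> Gg; rewrite commgEl -[s1 g ^ s2 a](sdpair_act _ Gg AutGa).
by rewrite -morphV // -morphM ?groupV ?(Aut_closed AutGa).
Qed.

Let sAG : <[a]> \subset Aut G. Proof. by rewrite cycle_subG. Qed.

Let nNA : A \subset 'N(N).
Proof. exact: subset_trans (morphimS _ sAG) (im_sdpair_norm to). Qed.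

Lemma sdpair1_sub_cyc_aut : N \subset Q.
Proof. exact: joing_subl. Qed.

Lemma sdpair2_mem_cyc_aut : s2 a \in Q.
Proof. by apply: (subsetP (joing_subr _ _)); apply: mem_morphim (cycle_id a). Qed.

Lemma normal_sdpair1_cyc_aut : N <| Q.
Proof. by rewrite normalYl nNA. Qed.

Lemma card_sdprod_cyc_aut : #|Q| = (#|G| * #[a])%N.
Proof.
have tiNA : N :&: A = 1.
  by apply/trivgP; rewrite -(im_sdpair_TI to) setIS // morphimS.
rewrite /sdprod_cyc_aut /= norm_joinEr // TI_cardMg //.
by rewrite !card_injm ?injm_sdpair1 ?injm_sdpair2.
Qed.

Lemma index_sdpair1_cyc_aut : #|Q : N| = #[a].
Proof.
apply/eqP; rewrite -(eqn_pmul2l (cardG_gt0 N)) Lagrange ?sdpair1_sub_cyc_aut //.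
by rewrite card_sdprod_cyc_aut card_injm ?injm_sdpair1.
Qed.

Lemma der1_sdprod_cyc_aut : Q^`(1) \subset N.
Proof.
apply: der1_min (normal_norm normal_sdpair1_cyc_aut) _.
rewrite /sdprod_cyc_aut /= norm_joinEr // quotientMidl.
exact/cyclic_abelian/quotient_cyclic/morphim_cyclic/cycle_cyclic.
Qed.

End CyclicAutSdprod.

Section CharacterDegrees.
Local Open Scope ring_scope.
Variable gT : finGroupType.

Lemma irr1_center_prime (H : {group gT}) p m (i : Iirr H) :
    prime p -> nilpotent H -> (H^`(1))%g = 'Z(H) -> #|'Z(H)| = p ->
    #|H : 'Z(H)| = (m ^ 2)%N ->
  'chi_i \is a linear_char \/ 'chi_i 1%g = m%:R.
Proof.
move=> p_pr nilH H'Z cardZ indexZ.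
have [lin|nlin] := boolP ('chi_i \is a linear_char); [by left | right].
have ffi : cfaithful 'chi_i.
  rewrite cfaithfulE; apply: contraR nlin => ntK.
  rewrite subG1 in ntK; have ntKZ := meet_center_nil nilH (cfker_normal _) ntK.
  have sKZ : cfker 'chi_i :&: 'Z(H) \subset 'Z(H) := subsetIr _ _.
  have KZ : cfker 'chi_i :&: 'Z(H) = 'Z(H).
    apply/eqP; rewrite eqEcard sKZ /= cardZ.
    have := cardSg sKZ; rewrite cardZ => /(prime_nt_dvdP p_pr).
    by rewrite -trivg_card1 => /(_ ntKZ) ->.
  by rewrite lin_irr_der1 H'Z -KZ subsetIl.
have abHZ : abelian (H / 'Z('chi_i)%CF).
  by rewrite cfcenter_fful_irr // sub_der1_abelian // H'Z.
have := irr1_abelian_bound abHZ; rewrite cfcenter_fful_irr // indexZ.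
have /natrP[k ->] := Cnat_irr1 i.
by rewrite -natrX => /eqP; rewrite eqr_nat eqn_exp2r // => /eqP->.
Qed.

Lemma irr1_pgroup (G : {group gT}) p (i : Iirr G) :
  prime p -> p.-group G -> exists e, 'chi_i 1%g = (p ^ e)%:R.
Proof.
move=> p_pr /p_natP[k cardG]; have /natrP[d chi1] := Cnat_irr1 i.
have := dvd_irr1_cardG i; rewrite chi1 cardG dvdC_nat.
by case/(dvdn_pfactor _ _ p_pr) => e _ ->; exists e.
Qed.

Lemma irr1_constt_Res_le (G H : {group gT}) (i : Iirr G) (j : Iirr H) :
    H \subset G -> j \in irr_constt ('Res[H] 'chi_i) ->
  'chi_j 1%g <= 'chi_i 1%g <= #|G : H|%:R * 'chi_j 1%g.
Proof.
move=> sHG Hij; apply/andP; split.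
  by have := char1_ge_constt (cfRes_char H (irr_char i)) Hij; rewrite cfRes1.
rewrite -constt_Ind_Res in Hij.
by have := char1_ge_constt (cfInd_char G (irr_char j)) Hij; rewrite cfInd1.
Qed.

Lemma irr1_sqr_lt_card (G : {group gT}) (i : Iirr G) :
  i != 0 -> 'chi_i 1%g ^+ 2 < #|G|%:R.
Proof.
move=> nz_i; rewrite -irr_sum_square (bigD1 0) //= (bigD1 i) //= addrCA ltrDl.
rewrite irr0 cfun11 expr1n (lt_le_trans ltr01) // lerDl.
by apply: sumr_ge0 => j _; rewrite exprn_ge0 // ltW ?irr1_gt0.
Qed.

End CharacterDegrees.

Section ExtraspecialAutomorphism.
Variables (p n : nat) (gT : finGroupType) (G : {group gT}) (x y : nat -> gT) (c : gT).
Hypotheses (p_pr : prime p) (p_odd : odd p) (n_gt2 : 2 < n).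
Hypotheses (cardG : #|G| = (p ^ (2 * n + 1))%N) (expG : exponent G = p).
Hypothesis defG : G :=: <<terms x n :|: terms y n>>.
Hypotheses (ZG : 'Z(G) = <[c]>) (G'c : G^`(1) = <[c]>) (oc : #[c] = p).
Hypotheses (cxx : forall i j, i < n -> j < n -> [~ x i, x j] = 1)
           (cyy : forall i j, i < n -> j < n -> [~ y i, y j] = 1)
           (cxy : forall i, i < n -> [~ x i, y i] = c)
           (cxy' : forall i j, i < n -> j < n -> i != j -> [~ x i, y j] = 1).

Let lt0n : 0 < n. Proof. exact: ltn_trans n_gt2. Qed.
Let lt1n : 1 < n. Proof. exact: ltn_trans n_gt2. Qed.

Let xG i : i < n -> x i \in G.
Proof. by move=> lt_in; rewrite defG mem_gen // in_setU mem_terms. Qed.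

Let yG i : i < n -> y i \in G.
Proof. by move=> lt_in; rewrite defG mem_gen // in_setU mem_terms ?orbT. Qed.

Let G'Z : G^`(1) \subset 'Z(G). Proof. by rewrite ZG G'c. Qed.

Let c_neq1 : c != 1.
Proof. by apply: contraTneq p_pr => c1; rewrite -oc c1 order1. Qed.

Let cent_c g : g \in G -> commute g c.
Proof.
move=> Gg; have /setIP[_ /centP cGc] : c \in 'Z(G) by rewrite ZG cycle_id.
exact/commute_sym/cGc.
Qed.

Let expgp g : g \in G -> g ^+ p = 1.
Proof. by move=> Gg; rewrite -expG expg_exponent. Qed.

Let commute_x i j : i < n -> j < n -> commute (x i) (x j).
Proof. by move=> lt_in lt_jn; apply/commgP/eqP/cxx. Qed.

Let commute_y i j : i < n -> j < n -> commute (y i) (y j).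
Proof. by move=> lt_in lt_jn; apply/commgP/eqP/cyy. Qed.

Let abelian_gen_terms (w : nat -> gT) :
  (forall i j, i < n -> j < n -> [~ w i, w j] = 1) -> abelian <<terms w n>>.
Proof.
move=> cww; rewrite abelian_gen; apply/centsP=> _ /imsetP[i _ ->] _ /imsetP[j _ ->].
by apply/commgP/eqP; apply: cww; apply: ltn_ord.
Qed.

Lemma comm_xy i j : i < n -> j < n -> [~ x i, y j] = if i == j then c else 1.
Proof. by move=> lt_in lt_jn; case: eqVneq => [<- | ]; [apply: cxy | apply: cxy']. Qed.

Definition alpha_x (i : nat) : gT :=
  if i == 1%N then x 0 * x 1 else if i == 2 then x 1 * x 2 else x i.

Definition alpha_y (i : nat) : gT :=
  if i == 0 then y 0 * (y 1)^-1 * y 2 else if i == 1%N then y 1 * (y 2)^-1 else y i.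

Lemma alpha_x_gen i : i < n -> alpha_x i \in <<terms x n>>.
Proof.
have mem_x k : k < n -> x k \in <<terms x n>> by move=> lt_kn; rewrite mem_gen ?mem_terms.
by move=> lt_in; rewrite /alpha_x; case: eqP => _; [|case: eqP => _]; rewrite ?groupM ?mem_x.
Qed.

Lemma alpha_y_gen i : i < n -> alpha_y i \in <<terms y n>>.
Proof.
have mem_y k : k < n -> y k \in <<terms y n>> by move=> lt_kn; rewrite mem_gen ?mem_terms.
by move=> lt_in; rewrite /alpha_y; case: eqP => _; [|case: eqP => _];
  rewrite ?groupM ?groupV ?mem_y.
Qed.

Let alpha_xG i : i < n -> alpha_x i \in G.
Proof. by move/alpha_x_gen; apply: subsetP; rewrite defG genS ?subsetUl. Qed.

Let alpha_yG i : i < n -> alpha_y i \in G.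
Proof. by move/alpha_y_gen; apply: subsetP; rewrite defG genS ?subsetUr. Qed.

Lemma comm_alpha i j : i < n -> j < n ->
  [~ alpha_x i, alpha_y j] = if i == j then c else 1.
Proof.
move=> lt_in lt_jn.
case: i lt_in => [|[|[|i]]] lt_in; case: j lt_jn => [|[|j]] lt_jn; rewrite /alpha_x /alpha_y /=;
  rewrite ?(commMg_class2 G'Z) ?(commgM_class2 G'Z) ?(commgV_class2 G'Z) ?groupM ?groupV ?xG ?yG //;
  by rewrite ?comm_xy //= ?(invg1, mulg1, mul1g, mulgV, mulVg).
Qed.

Local Notation graph_alpha :=
  <<terms (fun i => (x i, alpha_x i)) n :|: terms (fun i => (y i, alpha_y i)) n>>.

Lemma card_graph_alpha : #|graph_alpha| <= #|G|.
Proof.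
rewrite cardG; apply: (@card_heisenberg_gen_le _ _ _ _ (c, c)); first exact: prime_gt0.
- by rewrite expg_pair -oc expg_order.
- by move=> i lt_in; rewrite expg_pair !expgp ?xG ?alpha_xG.
- by move=> i lt_in; rewrite expg_pair !expgp ?yG ?alpha_yG.
- by move=> i lt_in; apply: commute_pair; apply: cent_c; rewrite ?xG ?alpha_xG.
- by move=> i lt_in; apply: commute_pair; apply: cent_c; rewrite ?yG ?alpha_yG.
- move=> i j lt_in lt_jn; apply: commute_pair; first exact: commute_x.
  exact: (centsP (abelian_gen_terms cxx)) _ (alpha_x_gen lt_in) _ (alpha_x_gen lt_jn).
- move=> i j lt_in lt_jn; apply: commute_pair; first exact: commute_y.
  exact: (centsP (abelian_gen_terms cyy)) _ (alpha_y_gen lt_in) _ (alpha_y_gen lt_jn).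
move=> i j lt_in lt_jn; rewrite -[[~ _, _]]/([~ x i, y j], [~ alpha_x i, alpha_y j]).
by rewrite comm_xy // comm_alpha //; case: eqP => _; [apply: cycle_id | apply: group1].
Qed.

Lemma fst_graph_alpha : @fst gT gT @* graph_alpha = G.
Proof. by rewrite morphim_gen ?subsetT // morphimEsub ?subsetT // imsetU !imset_terms defG. Qed.

Lemma exists_alpha : exists2 a : {perm gT}, a \in Aut G &
  (forall i, i < n -> a (x i) = alpha_x i) /\ (forall i, i < n -> a (y i) = alpha_y i).
Proof.
have [phi phiE] := graph_morphism fst_graph_alpha card_graph_alpha.
have phix i : i < n -> phi (x i) = alpha_x i.
  move=> lt_in; apply: (phiE (x i, alpha_x i)); rewrite mem_gen //; apply/setUP; left.
  exact: (mem_terms (fun k => (x k, alpha_x k))).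
have phiy i : i < n -> phi (y i) = alpha_y i.
  move=> lt_in; apply: (phiE (y i, alpha_y i)); rewrite mem_gen //; apply/setUP; right.
  exact: (mem_terms (fun k => (y k, alpha_y k))).
have imx i : i < n -> alpha_x i \in phi @* G by move=> lt_in; rewrite -phix ?mem_morphim ?xG.
have imy i : i < n -> alpha_y i \in phi @* G by move=> lt_in; rewrite -phiy ?mem_morphim ?yG.
have phiG : phi @* G = G.
  apply/esym/eqP; rewrite eqEcard leq_morphim andbT.
  have im_x0 : x 0 \in phi @* G := imx 0 lt0n.
  have im_x1 : x 1 \in phi @* G.
    have ->: x 1 = (x 0)^-1 * alpha_x 1 by rewrite /alpha_x /= mulKg.
    by rewrite groupM ?groupV ?imx.
  have im_y2 : y 2 \in phi @* G := imy 2 n_gt2.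
  have im_y1 : y 1 \in phi @* G.
    have ->: y 1 = alpha_y 1 * y 2 by rewrite /alpha_y /= mulgKV.
    by rewrite groupM ?imy.
  rewrite {1}defG gen_subG subUset; apply/andP; split;
    apply/subsetP=> _ /imsetP[[i lt_in] _ ->] /=.
    case: i lt_in => [|[|[|i]]] lt_in //; last exact: (imx i.+3).
    have ->: x 2 = (x 1)^-1 * alpha_x 2 by rewrite /alpha_x /= mulKg.
    by rewrite groupM ?groupV ?imx.
  case: i lt_in => [|[|i]] lt_in //; last exact: (imy i.+2).
  have ->: y 0 = alpha_y 0 * (y 2)^-1 * y 1 by rewrite /alpha_y /= mulgK mulgKV.
  by rewrite groupM // groupM ?groupV ?imy.
have injphi : 'injm phi by rewrite -card_im_injm phiG.
exists (aut injphi phiG); first exact: Aut_aut.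
by split=> i lt_in; rewrite autE ?xG ?yG //; [apply: phix | apply: phiy].
Qed.

Variable a : {perm gT}.
Hypotheses (AutGa : a \in Aut G) (a_x : forall i, i < n -> a (x i) = alpha_x i)
  (a_y : forall i, i < n -> a (y i) = alpha_y i).

Let aM g h : g \in G -> h \in G -> a (g * h) = a g * a h.
Proof. by move=> Gg Gh; rewrite -!(autmE AutGa) morphM. Qed.
Let aX g k : g \in G -> a (g ^+ k) = a g ^+ k.
Proof. by move=> Gg; rewrite -!(autmE AutGa) morphX. Qed.
Let aV g : g \in G -> a g^-1 = (a g)^-1.
Proof. by move=> Gg; rewrite -!(autmE AutGa) morphV. Qed.

Lemma expg_alpha_x1 k : (a ^+ k) (x 1) = x 0 ^+ k * x 1.
Proof.
elim: k => [|k IHk]; first by rewrite expg0 perm1 mul1g.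
by rewrite expgSr permM IHk aM ?groupX ?xG // aX ?xG // !a_x // mulgA -expgSr.
Qed.

Lemma expg_alpha_x2 k : (a ^+ k) (x 2) = x 0 ^+ 'C(k, 2) * x 1 ^+ k * x 2.
Proof.
elim: k => [|k IHk]; first by rewrite expg0 perm1 !mul1g.
rewrite expgSr permM IHk !aM ?groupM ?groupX ?xG // !aX ?xG // !a_x //=.
by rewrite (expgMn _ (commute_x lt0n lt1n)) binS bin1 expgD expgSr !mulgA.
Qed.

Lemma expg_alpha_y1 k : (a ^+ k) (y 1) = y 1 * (y 2)^-1 ^+ k.
Proof.
elim: k => [|k IHk]; first by rewrite expg0 perm1 mulg1.
rewrite expgSr permM IHk aM ?groupX ?groupV ?yG // aX ?groupV ?yG // aV ?yG //.
by rewrite !a_y //= expgS mulgA.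
Qed.

Lemma expg_alpha_y0 k : (a ^+ k) (y 0) = y 0 * (y 1)^-1 ^+ k * y 2 ^+ 'C(k.+1, 2).
Proof.
have c21 : commute (y 2) (y 1)^-1 := commuteV (commute_y n_gt2 lt1n).
elim: k => [|k IHk]; first by rewrite expg0 perm1 !mulg1.
rewrite expgSr permM IHk !aM ?groupM ?groupX ?groupV ?yG // !aX ?groupV ?yG //.
rewrite aV ?yG // !a_y // -[alpha_y 0]/(y 0 * (y 1)^-1 * y 2) -[alpha_y 1%N]/(y 1 * (y 2)^-1).
rewrite -[alpha_y 2]/(y 2) invMg invgK (expgMn _ c21) (binS k.+1 1) bin1.
rewrite mulgA -(mulgA (y 0 * (y 1)^-1) (y 2)) -expgS -(mulgA (y 0 * (y 1)^-1)).
rewrite (commuteX2 k.+1 k c21) mulgA -(mulgA (y 0)) -expgS.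
by rewrite -!mulgA addnC [in RHS]expgD.
Qed.

Lemma order_alpha : #[a] = p.
Proof.
have p_gt2 : 2 < p by rewrite odd_prime_gt2.
have p_dvd_bin2 : p %| 'C(p, 2) by rewrite prime_dvd_bin // p_gt2.
have expgp_dvd g m : g \in G -> p %| m -> g ^+ m = 1.
  by move=> Gg /dvdnP[q ->]; rewrite mulnC expgM expgp ?expg1n.
have ap1 : a ^+ p = 1.
  apply: (@Aut_gen_eq1 _ (terms x n :|: terms y n)); first by rewrite -defG groupX.
  move=> _ /setUP[] /imsetP[[i lt_in] _ ->] /=.
    case: i lt_in => [|[|[|i]]] lt_in; try by apply: permX_fix; rewrite a_x.
      by rewrite expg_alpha_x1 expgp ?xG ?mul1g.
    by rewrite expg_alpha_x2 !expgp_dvd ?xG ?mul1g.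
  case: i lt_in => [|[|i]] lt_in; try by apply: permX_fix; rewrite a_y.
    by rewrite expg_alpha_y0 !expgp_dvd ?groupV ?yG ?mulg1 // binS bin1 dvdn_add.
  by rewrite expg_alpha_y1 expgp ?groupV ?yG ?mulg1.
have a_neq1 : #[a] != 1%N.
  rewrite order_eq1; apply: contra c_neq1 => /eqP a1.
  have := a_x lt1n; rewrite a1 perm1 /alpha_x /= => /esym/(congr1 (fun g => g * (x 1)^-1)).
  by rewrite mulgK mulgV => x01; rewrite -(cxy lt0n) x01 comm1g.
by apply/(prime_nt_dvdP p_pr a_neq1); rewrite order_dvdn ap1.
Qed.

Local Notation to := (aut_groupAction G).
Local Notation s1 := (sdpair1 to).
Local Notation s2 := (sdpair2 to).
Local Notation N := (s1 @* G).
Local Notation Q := (sdprod_cyc_aut G a).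

Let s1Q g : g \in G -> s1 g \in Q.
Proof. by move=> Gg; rewrite (subsetP (sdpair1_sub_cyc_aut G a)) ?mem_morphim. Qed.

Let N'Z : (N^`(1))%g = 'Z(N).
Proof. by rewrite -morphim_der // G'c -ZG injm_center ?injm_sdpair1. Qed.

Let N'c : (N^`(1))%g = s1 @* <[c]>.
Proof. by rewrite -morphim_der // G'c. Qed.

Lemma sdpair1_x1_der1 : s1 (x 1) \in Q^`(1).
Proof.
have ->: s1 (x 1) = [~ s1 (x 2), s2 a].
  by rewrite commg_sdpair12 ?xG // a_x // /alpha_x /= (commute_x lt1n n_gt2) mulKg.
by rewrite mem_commg ?s1Q ?xG ?sdpair2_mem_cyc_aut.
Qed.

Lemma sdpair1_y1V_der1 : s1 (y 1)^-1 \in Q^`(1).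
Proof.
have ->: s1 (y 1)^-1 = [~ s1 (y 0), s2 a] * [~ s1 (y 1), s2 a].
  rewrite !commg_sdpair12 ?yG // !a_y // /alpha_y /= -morphM ?groupM ?groupV ?yG //.
  by congr (s1 _); rewrite !mulgA mulVg mul1g mulgKV mulgK.
by rewrite groupM // mem_commg ?s1Q ?yG ?sdpair2_mem_cyc_aut.
Qed.

Lemma der2_sdprod_neq1 : Q^`(2) != 1.
Proof.
have Q''xy : [~ s1 (x 1), s1 (y 1)^-1] \in Q^`(2).
  exact: mem_commg sdpair1_x1_der1 sdpair1_y1V_der1.
apply: contraTneq Q''xy => ->; rewrite inE -morphR ?groupV ?xG ?yG //.
rewrite morph_injm_eq1 ?injm_sdpair1 ?groupR ?groupV ?xG ?yG //.
by rewrite (commgV_class2 G'Z) ?xG ?yG // cxy // eq_invg1.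
Qed.

Lemma der3_sdprod_eq1 : Q^`(3) = 1.
Proof.
apply/trivgP; apply: subset_trans (dergS 2 (der1_sdprod_cyc_aut AutGa)) _.
rewrite -[N^`(2)]/((N^`(1))^`(1)) N'c.
by have /derG1P-> : abelian (s1 @* <[c]>) by rewrite morphim_abelian ?cycle_abelian.
Qed.

Lemma derived_length_sdprod : has_derived_length Q 3.
Proof.
split=> [|j]; first exact: der3_sdprod_eq1.
case: j => [|[|[|j]]] // _; last exact: der2_sdprod_neq1.
  apply: contraNneq der2_sdprod_neq1 => Q1; apply/eqP/trivgP.
  by rewrite -Q1; apply: der_sub.
apply: contraNneq der2_sdprod_neq1 => Q'1; apply/eqP/trivgP.
by rewrite -Q'1; apply: der_subS.
Qed.

Section Degrees.
Local Open Scope ring_scope.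

Let cardQ : #|Q| = (p ^ (2 * n + 2))%N.
Proof. by rewrite card_sdprod_cyc_aut // cardG order_alpha -expnSr -addnS. Qed.

Let pgroupQ : p.-group Q.
Proof. by rewrite /pgroup cardQ pnatX pnat_id. Qed.

Let sNQ : N \subset Q := sdpair1_sub_cyc_aut G a.

Lemma irr1_sdpair1 (t : Iirr N) : 'chi_t \is a linear_char \/ 'chi_t 1%g = (p ^ n)%:R.
Proof.
have cardN : #|N| = #|G| by rewrite card_injm ?injm_sdpair1.
have cardZ : #|'Z(N)| = p by rewrite -N'Z N'c card_injm ?injm_sdpair1 // -G'c der_sub.
have nilN : nilpotent N.
  by apply: (pgroup_nil (p := p)); rewrite /pgroup cardN cardG pnatX pnat_id.
have indexZ : #|N : 'Z(N)| = ((p ^ n) ^ 2)%N.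
  apply/eqP; rewrite -(eqn_pmul2l (prime_gt0 p_pr)) -{1}cardZ Lagrange ?center_sub //.
  by rewrite cardN cardG -expnM -expnS mulnC addn1.
exact: irr1_center_prime p_pr nilN N'Z cardZ indexZ.
Qed.

Lemma irr1_sdprod_over_linear (i : Iirr Q) (t : Iirr N) :
    t \in irr_constt ('Res[N] 'chi_i) -> 'chi_t \is a linear_char ->
  'chi_i 1%g = 1 \/ 'chi_i 1%g = p%:R.
Proof.
move=> Ht lin_t; have [e chi1] := irr1_pgroup i p_pr pgroupQ.
have /andP[_] := irr1_constt_Res_le sNQ Ht.
rewrite (index_sdpair1_cyc_aut AutGa) order_alpha (lin_char1 lin_t) mulr1 {1}chi1 ler_nat.
rewrite -{2}(expn1 p) leq_exp2l ?prime_gt1 // chi1 => le_e1.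
have [->|->] : e = 0%N \/ e = 1%N by lia.
  by left.
by right; rewrite expn1.
Qed.

Lemma irr1_sdprod_over_nonlinear (i : Iirr Q) (t : Iirr N) :
    t \in irr_constt ('Res[N] 'chi_i) -> 'chi_t 1%g = (p ^ n)%:R ->
  'chi_i 1%g = (p ^ n)%:R.
Proof.
move=> Ht chit; have [e chi1] := irr1_pgroup i p_pr pgroupQ.
have p_gt1 := prime_gt1 p_pr.
have /andP[le_ti _] := irr1_constt_Res_le sNQ Ht.
rewrite chit chi1 ler_nat leq_exp2l // in le_ti.
have nz_i : i != 0.
  apply: contraTneq le_ti => i0; move: chi1; rewrite i0 irr0 cfun11 => /esym/eqP.
  by rewrite pnatr_eq1 -(expn0 p) eqn_exp2l // => /eqP->; rewrite -ltnNge.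
have := irr1_sqr_lt_card nz_i; rewrite chi1 cardQ -natrX ltr_nat -expnM ltn_exp2l // => lt_e.
by have -> : e = n by lia.
Qed.

Lemma irr1_sdprod (i : Iirr Q) :
  [\/ 'chi_i 1%g = 1, 'chi_i 1%g = p%:R | 'chi_i 1%g = (p ^ n)%:R].
Proof.
have [t Ht] := neq0_has_constt (Res_irr_neq0 N i).
case: (irr1_sdpair1 t) => [lin_t | chit]; last exact/Or33/(irr1_sdprod_over_nonlinear Ht).
by case: (irr1_sdprod_over_linear Ht lin_t) => ->; [apply: Or31 | apply: Or32].
Qed.

Lemma exists_irr1_sdprod_pn : exists i : Iirr Q, 'chi_i 1%g = (p ^ n)%:R.
Proof.
have [t nlin_t] : exists t : Iirr N, 'chi_t \isn't a linear_char.
  have ntN' : (N^`(1))%g != 1%g.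
    rewrite N'c (morphim_injm_eq1 (injm_sdpair1 to)) ?cycle_eq1 //.
    by rewrite -G'c der_sub.
  apply/existsP; apply: contraR ntN'; rewrite negb_exists => /forallP lin.
  by apply/eqP/derG1P/char_abelianP => t; have := lin t; rewrite negbK.
have [i Hi] := neq0_has_constt (Ind_irr_neq0 t sNQ).
rewrite constt_Ind_Res in Hi; exists i; apply: irr1_sdprod_over_nonlinear Hi _.
by case: (irr1_sdpair1 t) => // lin_t; rewrite lin_t in nlin_t.
Qed.

Let x0_notin_Z : x 0 \notin 'Z(G).
Proof.
apply: contra c_neq1 => /setIP[_ /centP cx0]; rewrite -(cxy lt0n).
by apply/commgP; apply: cx0 (yG lt0n).
Qed.

Lemma exists_irr1_sdprod_p : exists i : Iirr Q, 'chi_i 1%g = p%:R.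
Proof.
have [l lin_l chil] : exists2 l : Iirr N, 'chi_l \is a linear_char & 'chi_l (s1 (x 0)) != 1.
  apply/exists_inP; apply: contraR x0_notin_Z; rewrite negb_exists_in => /forall_inP kerx0.
  have : s1 (x 0) \in \bigcap_(l | 'chi[N]_l \is a linear_char) cfker 'chi_l.
    apply/bigcapP => l lin_l; rewrite cfkerEirr inE (lin_char1 lin_l).
    by have := kerx0 l lin_l; rewrite negbK.
  rewrite cap_cfker_lin_irr N'c -ZG => /morphimP[w Gw Zw].
  by move/(injmP (injm_sdpair1 to) _ _ (xG lt0n) Gw)->.
have [i Hi] := neq0_has_constt (Ind_irr_neq0 l sNQ).
rewrite constt_Ind_Res in Hi; exists i.
have [chi1|//] := irr1_sdprod_over_linear Hi lin_l.
have lin_i : 'chi_i \is a linear_char by rewrite qualifE/= irr_char chi1 eqxx.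
have /irrP[r chiN] := lin_char_irr (cfRes_lin_char N lin_i).
move: Hi; rewrite chiN constt_irr inE => /eqP lr; rewrite -lr in chiN.
(* A linear character of Q is trivial on s1 (x 0) = [s1 (x 1), s2 a]. *)
have x1a : (s1 (x 1) ^ s2 a)%g = (s1 (x 0) * s1 (x 1))%g.
  rewrite -(sdpair_act to (xG lt1n) AutGa) -morphM ?xG //.
  by congr (s1 _); apply: a_x.
have : 'chi_i (s1 (x 0) * s1 (x 1))%g = 'chi_i (s1 (x 1)).
  by rewrite -x1a cfunJ ?s1Q ?xG ?sdpair2_mem_cyc_aut.
rewrite (lin_charM lin_i) ?s1Q ?xG // -{2}['chi_i (s1 (x 1))]mul1r.
move/(mulIf (lin_char_neq0 lin_i (s1Q (xG lt1n)))) => chi_x0.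
by case/negP: chil; rewrite -chiN cfResE ?mem_morphim ?xG // chi_x0.
Qed.

Lemma cd_sdprod : cd Q =i [:: 1; p%:R; (p ^ n)%:R].
Proof.
move=> d; rewrite !inE; apply/existsP/idP => [[i /eqP <-] | ].
  by case: (irr1_sdprod i) => ->; rewrite eqxx ?orbT.
case/or3P => /eqP ->.
- by exists 0; rewrite irr0 cfun11.
- by have [i chi1] := exists_irr1_sdprod_p; exists i; rewrite chi1.
- by have [i chi1] := exists_irr1_sdprod_pn; exists i; rewrite chi1.
Qed.

End Degrees.

Lemma sdprod_alpha_spec :
  [/\ #[a] = p, has_derived_length Q 3 & cd Q =i [:: 1%R; p%:R; (p ^ n)%:R]%R].
Proof. by split; [apply: order_alpha | apply: derived_length_sdprod | apply: cd_sdprod]. Qed.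

End ExtraspecialAutomorphism.

Theorem mainTheorem1 (p n : nat) (gT : finGroupType) (G : {group gT})
    (x y : nat -> gT) (c : gT) :
  prime p -> odd p -> 3 <= n ->
  extraspecial G -> #|G| = (p ^ (2 * n + 1))%N -> exponent G = p ->
  G :=: << [set x (val i) | i : 'I_n] :|: [set y (val i) | i : 'I_n] >> ->
  'Z(G) = <[c]> -> G^`(1) = <[c]> -> #[c] = p ->
  (forall i j, i < n -> j < n -> [~ x i, x j] = 1) ->
  (forall i j, i < n -> j < n -> [~ y i, y j] = 1) ->
  (forall i, i < n -> [~ x i, y i] = c) ->
  (forall i j, i < n -> j < n -> i != j -> [~ x i, y j] = 1) ->
  exists2 a : {perm gT}, a \in Aut G &
    [/\ [/\ a (x 0%N) = x 0%N, a (x 1%N) = x 0%N * x 1%N, a (x 2%N) = x 1%N * x 2%N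
           & forall i, 3 <= i < n -> a (x i) = x i],
        [/\ a (y 0%N) = y 0%N * (y 1%N)^-1 * y 2%N, a (y 1%N) = y 1%N * (y 2%N)^-1
           & forall i, 2 <= i < n -> a (y i) = y i],
        #[a] = p,
        has_derived_length (sdprod_cyc_aut G a) 3
      & cd (sdprod_cyc_aut G a) =i [:: 1%R; p%:R; (p ^ n)%N%:R]%R].
Proof.
move=> p_pr p_odd n_gt2 _ cardG expG defG ZG G'c oc cxx cyy cxy cxy'.
have [a AutGa [a_x a_y]] :=
  exists_alpha p_pr n_gt2 cardG expG defG ZG G'c oc cxx cyy cxy cxy'.
have [oa dlQ cdQ] :=
  sdprod_alpha_spec p_pr p_odd n_gt2 cardG expG defG ZG G'c oc cxx cyy cxy AutGa a_x a_y.
have [lt0n lt1n] : 0 < n /\ 1 < n by split; apply: ltn_trans n_gt2.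
exists a => //; split=> //; split; rewrite ?a_x ?a_y //.
- by move=> i /andP[le3i lt_in]; rewrite a_x // /alpha_x; case: i le3i {lt_in} => [|[|[|i]]].
- by move=> i /andP[le2i lt_in]; rewrite a_y // /alpha_y; case: i le2i {lt_in} => [|[|i]].
Qed.
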